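(* Let $\kappa\ge\aleph_0$ be a cardinal, let $P$ be a $d$-dimensional $k$-template, and let $X_0,X_1,\dots,X_{d-1}$ be sets with $|X_i|\ge\kappa^{+i}$ for each $i<d$. Let $X=X_0\times X_1\times\cdots\times X_{d-1}$. Then $\chi(L(X,P))\ge\kappa$.
   Context: Here $1\le d<\omega$, $2\le k<\omega$. A $d$-dimensional $k$-template is a set $P$ of $d$-tuples with $|P|=k$. If $P,Q$ are $d$-dimensional templates, $Q$ is a homomorphic image of $P$ if there is a surjection $f:P\to Q$ such that for all $x,y\in P$ and $i<d$, $x_i=y_i$ implies $f(x)_i=f(y)_i$. For $X=X_0\times\cdots\times X_{d-1}$, $L(X,P)$ is the $k$-hypergraph with vertex set $X$ whose edges are the $k$-templates $Q\subseteq X$ that are homomorphic images of $P$. $\chi$ is the chromatic number (least cardinal number of colors in a vertex coloring not constant on any edge). $\kappa^+$ is the successor cardinal, $\kappa^{+0}=\kappa$, $\kappa^{+(n+1)}=(\kappa^{+n})^+$. *)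

From mathcomp Require Import all_boot.
Set Implicit Arguments. Unset Strict Implicit. Unset Printing Implicit Defensive.

Definition card_le (A B : Type) : Prop := exists f : A -> B, injective f.
Definition card_lt (A B : Type) : Prop := card_le A B /\ ~ card_le B A.
Definition card_eq (A B : Type) : Prop := exists f : A -> B, bijective f.

Definition is_successor (M L : Type) : Prop :=
  card_lt M L /\ forall Z : Type, card_lt M Z -> card_le L Z.

Fixpoint is_succ_pow (n : nat) (K L : Type) : Prop :=
  match n with
  | 0 => card_eq K L
  | m.+1 => exists M : Type, is_succ_pow m K M /\ is_successor M L
  end.

Definition card_ge_succ_pow (n : nat) (K Y : Type) : Prop :=
  exists L : Type, is_succ_pow n K L /\ card_le L Y.

Definition dtuple (d : nat) (A : 'I_d -> Type) := forall i : 'I_d, A i.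

Definition is_template (d k : nat) (A : 'I_d -> Type) (Q : dtuple A -> Prop) : Prop :=
  exists e : 'I_k -> dtuple A, injective e /\ forall v, Q v <-> exists j, e j = v.

Definition hom_image (d : nat) (A B : 'I_d -> Type)
    (P : dtuple A -> Prop) (Q : dtuple B -> Prop) : Prop :=
  exists f : {x | P x} -> {y | Q y},
    (forall y : {y | Q y}, exists x, f x = y) /\
    forall (x y : {x | P x}) (i : 'I_d),
      proj1_sig x i = proj1_sig y i -> proj1_sig (f x) i = proj1_sig (f y) i.

Definition L_edge (d k : nat) (A X : 'I_d -> Type) (P : dtuple A -> Prop)
    (Q : dtuple X -> Prop) : Prop :=
  is_template k Q /\ hom_image P Q.

Definition proper_coloring (V C : Type) (E : (V -> Prop) -> Prop) (c : V -> C) : Prop :=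
  forall Q, E Q -> exists x y, Q x /\ Q y /\ c x <> c y.

Definition chi_ge (V : Type) (E : (V -> Prop) -> Prop) (K : Type) : Prop :=
  forall (C : Type) (c : V -> C), card_lt C K -> ~ proper_coloring E c.

(* Fix a set L of size K^{+(d-1)} and, inside it, an increasing chain S_0 <= ... <= S_{d-1}
   with |S_i| = K^{+i}; S_i embeds into X_i.  Given a colouring c with fewer than K colours,
   induction on m yields injective k-tuples t_0, ..., t_{m-1} (t_i in S_i) such that c is
   constant on the grid t_0 x ... x t_{m-1} x (fixed remaining coordinates): for every
   z in S_m run the induction with coordinate m frozen to z; the resulting colour and rows
   take fewer than |S_m| values (at most |C| < K for m = 0, at most K^{+(m-1)} otherwise),
   so some k distinct z give the same data.  Every k-template has a homomorphic copy inside
   a grid of injective k-tuples, which is then a monochromatic edge.  The cardinal arithmetic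
   used -- comparability and |A x A| = |A| for infinite A -- is derived from Zorn's lemma. *)

From mathcomp Require Import all_boot.
From mathcomp Require Import boolp classical_sets.
Set Implicit Arguments. Unset Strict Implicit. Unset Printing Implicit Defensive.
Local Open Scope classical_set_scope.

Lemma card_le_refl (A : Type) : card_le A A.
Proof. by exists id. Qed.

Lemma card_le_trans (A B C : Type) : card_le A B -> card_le B C -> card_le A C.
Proof. by move=> [f f_inj] [g g_inj]; exists (g \o f) => x y /g_inj /f_inj. Qed.

Lemma proj1_sig_inj (T : Type) (P : T -> Prop) : injective (@proj1_sig T P).
Proof. by move=> [x px] [y py] /= eq_xy; apply: eq_exist. Qed.

Lemma card_le_sig (T : Type) (P Q : T -> Prop) :
  (forall x, P x -> Q x) -> card_le {x | P x} {x | Q x}.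
Proof.
move=> PQ; exists (fun x => exist Q (proj1_sig x) (PQ _ (proj2_sig x))).
by move=> x y /(congr1 (@proj1_sig _ _)) /= /proj1_sig_inj.
Qed.

Lemma card_le_prod (A B A' B' : Type) :
  card_le A A' -> card_le B B' -> card_le (A * B) (A' * B').
Proof.
move=> [f f_inj] [g g_inj]; exists (fun p => (f p.1, g p.2)).
by move=> [a b] [a' b'] [/f_inj -> /g_inj ->].
Qed.

Lemma card_le_arrow (I A B : Type) : card_le A B -> card_le (I -> A) (I -> B).
Proof.
move=> [f f_inj]; exists (fun g i => f (g i)) => g g' eq_fg.
by apply: functional_extensionality_dep => i; apply: f_inj; apply: (congr1 (@^~ i) eq_fg).
Qed.

Definition partial_injection (E B : Type) (G : set (E * B)) :=
  (forall x y y', G (x, y) -> G (x, y') -> y = y') /\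
  (forall x x' y, G (x, y) -> G (x', y) -> x = x').

Lemma card_le_partial_injection (E B : Type) (G : set (E * B)) :
  partial_injection G -> (forall x, exists y, G (x, y)) -> card_le E B.
Proof.
move=> [_ G_inj] G_total; exists (fun x => proj1_sig (cid (G_total x))) => x x'.
case: (cid (G_total x)) => y Gy; case: (cid (G_total x')) => y' Gy' /= eq_y.
by subst y'; apply: G_inj Gy Gy'.
Qed.

Lemma partial_injection_bigcup (E B : Type) (F : set (set (E * B))) :
  F `<=` @partial_injection E B -> total_on F subset ->
  partial_injection (\bigcup_(G in F) G).
Proof.
move=> F_pinj F_total; split.
- move=> x y y' [G1 F1 G1y] [G2 F2 G2y]; case: (F_total _ _ F1 F2) => [G12|G21].
    by apply: (F_pinj _ F2).1 G2y; apply: G12.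
  by apply: (F_pinj _ F1).1 G1y _; apply: G21.
- move=> x x' y [G1 F1 G1y] [G2 F2 G2y]; case: (F_total _ _ F1 F2) => [G12|G21].
    by apply: (F_pinj _ F2).2 G2y; apply: G12.
  by apply: (F_pinj _ F1).2 G1y _; apply: G21.
Qed.

(* A maximal partial injection is total on one of the two sides: otherwise it
   extends by a pair of unmatched points. *)
Lemma card_le_total (E B : Type) : card_le E B \/ card_le B E.
Proof.
have [G [G_pinj G_max]] := Zorn_bigcup (@partial_injection_bigcup E B).
have [G_fun G_inj] := G_pinj.
case: (pselect (forall x, exists y, G (x, y))) => [G_left|/existsNP [x0 x0_free]].
  by left; apply: card_le_partial_injection G_left.
case: (pselect (forall y, exists x, G (x, y))) => [G_right|/existsNP [y0 y0_free]].
  right; apply: (@card_le_partial_injection _ _ (fun p => G (p.2, p.1))) => //.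
  by split=> [y x x' /= Gx Gx' | y y' x /= Gy Gy']; [apply: G_inj Gx Gx' | apply: G_fun Gy Gy'].
have {}x0_free y : ~ G (x0, y) by move=> Gy; apply: x0_free; exists y.
have {}y0_free x : ~ G (x, y0) by move=> Gx; apply: y0_free; exists x.
exfalso; apply: (G_max (G `|` [set (x0, y0)])).
  by split=> [p Gp|sub]; [left | apply: (x0_free y0); apply: sub; right].
split=> [x y y' | x x' y] [Gp|/pair_equal_spec[-> ->]] [Gp'|/pair_equal_spec[eq1 eq2]];
  subst => //; by [apply: G_fun Gp Gp' | apply: G_inj Gp Gp' | case: (x0_free _ Gp)
                   | case: (x0_free _ Gp') | case: (y0_free _ Gp) | case: (y0_free _ Gp')].
Qed.

Lemma card_le_image (T U : Type) (f : T -> U) (P : set T) :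
  card_le {y | (f @` P) y} {x | P x}.
Proof.
exists (fun y : {y | (f @` P) y} => exist P _ (s2valP (cid2 (proj2_sig y)))).
move=> [y1 h1] [y2 h2] /(congr1 (@proj1_sig _ _)) /= eq_x; apply: eq_exist.
case: (cid2 h1) eq_x => x1 Px1 fx1; case: (cid2 h2) => x2 Px2 fx2 /= eq_x.
by rewrite -fx1 -fx2 eq_x.
Qed.

Lemma card_le_image_inj (T U : Type) (f : T -> U) (P : set T) : injective f ->
  card_le {x | P x} {y | (f @` P) y}.
Proof.
move=> f_inj; exists (fun x => exist (f @` P) _ (imageP f (proj2_sig x))).
by move=> a b /(congr1 (@proj1_sig _ _)) /f_inj /proj1_sig_inj.
Qed.

Lemma card_le_range (B T : Type) (f : B -> T) : card_le {x | range f x} B.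
Proof.
apply: card_le_trans (card_le_image f setT) _.
by exists (@proj1_sig _ _); apply: proj1_sig_inj.
Qed.

Lemma card_le_setU (T : Type) (D E : set T) :
  card_le ({x | D x} * bool) {x | D x} -> card_le {x | E x} {x | D x} ->
  card_le {x | D x \/ E x} {x | D x}.
Proof.
move=> [dbl dbl_inj] [rho rho_inj].
pose tag (x : {x | D x \/ E x}) := match pselect (D (proj1_sig x)) with
  | left Dx => (exist D _ Dx, true)
  | right nDx => (rho (exist E _ (or_ind (fun Dx => False_ind _ (nDx Dx)) id (proj2_sig x))), false)
  end.
exists (dbl \o tag) => -[x hx] [y hy] /dbl_inj; rewrite /tag /=.
case: pselect => Dx; case: pselect => Dy [] //.
  by move=> exy; apply: eq_exist.
by move=> /rho_inj [exy]; apply: eq_exist.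
Qed.

Lemma card_le_of_setU_setC (T : Type) (D : set T) :
  card_le ({x | D x} * bool) {x | D x} -> card_le {x | ~ D x} {x | D x} ->
  card_le T {x | D x}.
Proof.
move=> dbl DC_le_D; apply: card_le_trans (card_le_setU dbl DC_le_D).
by exists (fun x => exist _ x (lem (D x))) => x y /(congr1 (@proj1_sig _ _)).
Qed.

Section Hessenberg.
Variables (A : Type) (iota : nat -> A).
Hypothesis iota_inj : injective iota.

Local Notation graph := (set ((A * A) * A)).

Definition gdom (G : graph) x := exists z, G ((x, x), z).

Local Notation dom G := {x | gdom G x}.

(* [G] is the graph of an injection [gdom G * gdom G -> gdom G], whose domain is read
   off the diagonal; the last clause keeps a copy of [nat] inside [gdom G]. *)
Definition square_graph (G : graph) :=
  [/\ forall p z z', G (p, z) -> G (p, z') -> z = z',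
      forall p p' z, G (p, z) -> G (p', z) -> p = p',
      forall x y, (exists z, G ((x, y), z)) <-> gdom G x /\ gdom G y,
      forall p z, G (p, z) -> gdom G z &
      forall a b, G ((iota a, iota b), iota (pickle (a, b)))].

Definition base_graph : graph :=
  fun t => exists a b, t = ((iota a, iota b), iota (pickle (a, b))).

Lemma square_graph_base : square_graph base_graph.
Proof.
split.
- move=> p z z' [a [b /pair_equal_spec [-> ->]]] [a' [b' /pair_equal_spec [eq_p ->]]].
  by case/pair_equal_spec: eq_p => /iota_inj -> /iota_inj ->.
- move=> p p' z [a [b /pair_equal_spec [-> ->]]] [a' [b' /pair_equal_spec [-> eq_z]]].
  by move/iota_inj/(pcan_inj pickleK): eq_z => [-> ->].
- move=> x y; split.
    move=> [z [a [b /pair_equal_spec [/pair_equal_spec [-> ->] _]]]].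
    by split; [exists (iota (pickle (a, a))); exists a, a
              | exists (iota (pickle (b, b))); exists b, b].
  move=> [[z1 [a [_ /pair_equal_spec [/pair_equal_spec [-> _] _]]]]
          [z2 [b [_ /pair_equal_spec [/pair_equal_spec [-> _] _]]]]].
  by exists (iota (pickle (a, b))); exists a, b.
- move=> p z [a [b /pair_equal_spec [_ ->]]].
  by exists (iota (pickle (pickle (a, b), pickle (a, b)))); exists (pickle (a, b)), (pickle (a, b)).
- by move=> a b; exists a, b.
Qed.

Lemma square_graph_bigcup (F : set graph) :
  F `<=` (fun G => G = set0 \/ square_graph G) -> total_on F subset ->
  let U := \bigcup_(G in F) G in U = set0 \/ square_graph U.
Proof.
move=> F_sq F_total U.
have square_of G t : F G -> G t -> square_graph G.
  by move=> FG Gt; case: (F_sq G FG) => // G0; rewrite G0 in Gt.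
have [[t0 [G0 FG0 G0t0]]|U0] := pselect (exists t, U t); last first.
  by left; apply/seteqP; split=> // t Ut; apply: U0; exists t.
right.
have common G1 G2 t1 t2 : F G1 -> F G2 -> G1 t1 -> G2 t2 ->
    exists G, [/\ F G, G t1, G t2 & square_graph G].
  move=> F1 F2 G1t1 G2t2; case: (F_total _ _ F1 F2) => sub.
  - by exists G2; split => //; [apply: sub | apply: square_of F2 G2t2].
  - by exists G1; split => //; [apply: sub | apply: square_of F1 G1t1].
split.
- move=> p z z' [G1 F1 G1z] [G2 F2 G2z'].
  by have [G [_ Gz Gz' [G_fun _ _ _ _]]] := common _ _ _ _ F1 F2 G1z G2z'; apply: G_fun Gz Gz'.
- move=> p p' z [G1 F1 G1p] [G2 F2 G2p'].
  by have [G [_ Gp Gp' [_ G_inj _ _ _]]] := common _ _ _ _ F1 F2 G1p G2p'; apply: G_inj Gp Gp'.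
- move=> x y; split.
    move=> [z [G1 F1 G1z]]; have [_ _ G1_dom _ _] := square_of _ _ F1 G1z.
    have [[zx G1x] [zy G1y]] : gdom G1 x /\ gdom G1 y by apply/G1_dom; exists z.
    by split; [exists zx; exists G1 | exists zy; exists G1].
  move=> [[zx [G1 F1 G1x]] [zy [G2 F2 G2y]]].
  have [G [FG Gx Gy [_ _ G_dom _ _]]] := common _ _ _ _ F1 F2 G1x G2y.
  have [z Gz] : exists z, G ((x, y), z) by apply/G_dom; split; [exists zx | exists zy].
  by exists z; exists G.
- move=> p z [G1 F1 G1z]; have [_ _ _ G1_rng _] := square_of _ _ F1 G1z.
  by have [z' G1z'] := G1_rng _ _ G1z; exists z'; exists G1.
- by move=> a b; exists G0 => //; case: (square_of _ _ FG0 G0t0).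
Qed.

Lemma card_le_dom_square G : square_graph G -> card_le (dom G * dom G) (dom G).
Proof.
move=> [_ G_inj G_dom G_rng _].
have G_total (a b : dom G) : exists z, G ((proj1_sig a, proj1_sig b), z).
  by apply/G_dom; split; [exact: proj2_sig a | exact: proj2_sig b].
exists (fun p => exist (gdom G) _ (G_rng _ _ (proj2_sig (cid (G_total p.1 p.2))))).
move=> [a b] [a' b'] /(congr1 (@proj1_sig _ _)) /=.
case: (cid (G_total a b)) => z Gz; case: (cid (G_total a' b')) => z' Gz' /= eq_z; subst z'.
by case/pair_equal_spec: (G_inj _ _ _ Gz Gz') => /proj1_sig_inj -> /proj1_sig_inj ->.
Qed.

Lemma gdom_iota G n : square_graph G -> gdom G (iota n).
Proof. by case=> _ _ _ _ G_base; exists (iota (pickle (n, n))). Qed.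

Lemma card_le_dom_bool G : square_graph G -> card_le (dom G * bool) (dom G).
Proof.
move=> G_sq; apply: card_le_trans (card_le_dom_square G_sq).
apply: card_le_prod (card_le_refl _) _.
exists (fun b : bool => exist (gdom G) _ (gdom_iota b G_sq)).
by move=> b b' /(congr1 (@proj1_sig _ _)) /iota_inj; case: b b' => [] [].
Qed.

(* If gdom G is not larger than its complement, a disjoint copy of gdom G in the
   complement lets G be extended to every pair of the enlarged domain. *)
Lemma square_graph_extend G : square_graph G -> card_le (dom G) {x | ~ gdom G x} ->
  exists G', G `<` G' /\ square_graph G'.
Proof.
move=> G_sq [phi phi_inj]; have [G_fun G_inj G_dom G_rng G_base] := G_sq.
have [F F_inj] := card_le_dom_square G_sq.
pose D' x := gdom G x \/ range (fun d => proj1_sig (phi d)) x.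
have [code code_inj] : card_le {x | D' x} (dom G).
  exact: card_le_setU (card_le_dom_bool G_sq) (card_le_range _).
have code_irr x (hx hx' : D' x) : code (exist _ x hx) = code (exist _ x hx').
  by rewrite (Prop_irrelevance hx hx').
pose new (t : (A * A) * A) := let: ((x, y), z) := t in
  exists (hx : D' x) (hy : D' y), ~ (gdom G x /\ gdom G y) /\
    z = proj1_sig (phi (F (code (exist _ _ hx), code (exist _ _ hy)))).
have G_pair x y z : G ((x, y), z) -> gdom G x /\ gdom G y by move=> Gz; apply/G_dom; exists z.
have phi_out d : ~ gdom G (proj1_sig (phi d)) := proj2_sig (phi d).
have new_diag x (hx : D' x) : ~ gdom G x ->
    new ((x, x), proj1_sig (phi (F (code (exist _ x hx), code (exist _ x hx))))).
  by move=> nGx; exists hx, hx; split=> // -[].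
have dom' x : gdom (G `|` new) x <-> D' x.
  split=> [[z [/G_pair [Gx _]|[hx _]]] | hx]; [by left | by [] |].
  by case: (pselect (gdom G x)) => [[z Gz]|nGx]; [exists z; left | eexists; right; exact: new_diag].
exists (G `|` new); split.
  split=> [t Gt|sub]; first by left.
  have hx0 : D' (proj1_sig (phi (exist _ _ (gdom_iota 0 G_sq)))) by right; eexists.
  by have /G_pair [/phi_out] := sub _ (or_intror (new_diag _ hx0 (phi_out _))).
split.
- move=> [x y] z z' [Gz|[hx [hy [nD ->]]]] [Gz'|[hx' [hy' [nD' ->]]]].
  + exact: G_fun Gz Gz'.
  + by case: nD'; apply: G_pair Gz.
  + by case: nD; apply: G_pair Gz'.
  + by rewrite (code_irr _ hx hx') (code_irr _ hy hy').
- move=> [x y] [x' y'] z [Gz|[hx [hy [_ ez]]]] [Gz'|[hx' [hy' [_ ez']]]].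
  + exact: G_inj Gz Gz'.
  + by case: (phi_out _ (eq_ind _ _ (G_rng _ _ Gz) _ ez')).
  + by case: (phi_out _ (eq_ind _ _ (G_rng _ _ Gz') _ ez)).
  + move: ez'; rewrite ez => /proj1_sig_inj /phi_inj /F_inj [].
    by move=> /code_inj /(congr1 (@proj1_sig _ _)) /= -> /code_inj /(congr1 (@proj1_sig _ _)) /= ->.
- move=> x y; rewrite !dom'; split=> [[z [/G_pair [Gx Gy]|[hx [hy _]]]] | [hx hy]].
  + by split; left.
  + by [].
  case: (pselect (gdom G x /\ gdom G y)) => [Dxy|nD].
    by have [z Gz] := (G_dom x y).2 Dxy; exists z; left.
  by eexists; right; exists hx, hy; split.
- move=> [x y] z [Gz|[hx [hy [_ ez]]]]; apply/dom'; first by left; apply: G_rng Gz.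
  by right; exists (F (code (exist _ _ hx), code (exist _ _ hy))) => //; rewrite ez.
- by move=> a b; left.
Qed.

Lemma square_graph_maximal :
  exists G, square_graph G /\ forall G', G `<` G' -> ~ square_graph G'.
Proof.
have [G [G_sq G_max]] := Zorn_bigcup square_graph_bigcup.
exists G; split=> [|G' GG' G'_sq]; last by apply: G_max GG' _; right.
case: G_sq => [G0|//]; exfalso; apply: (G_max base_graph); last by right; exact: square_graph_base.
rewrite G0; split=> // sub.
by have := sub ((iota 0, iota 0), iota (pickle (0, 0))) (ex_intro _ 0 (ex_intro _ 0 erefl)).
Qed.

Lemma card_le_square_of_inj : card_le (A * A) A.
Proof.
have [G [G_sq G_max]] := square_graph_maximal.
have compl_le : card_le {x | ~ gdom G x} (dom G).
  case: (card_le_total (dom G) {x | ~ gdom G x}) => // le.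
  by have [G' [GG' G'_sq]] := square_graph_extend G_sq le; case: (G_max _ GG' G'_sq).
have A_le := card_le_of_setU_setC (card_le_dom_bool G_sq) compl_le.
apply: card_le_trans (card_le_prod A_le A_le) _.
apply: card_le_trans (card_le_dom_square G_sq) _.
by exists (@proj1_sig _ _); apply: proj1_sig_inj.
Qed.

End Hessenberg.

Theorem card_le_square (A : Type) : card_le nat A -> card_le (A * A) A.
Proof. by move=> [iota iota_inj]; apply: card_le_square_of_inj iota_inj. Qed.

Lemma card_le_ord_nat k : card_le 'I_k nat.
Proof. by exists (@nat_of_ord k); apply: val_inj. Qed.

Lemma card_le_option (A : Type) : card_le nat A -> card_le (option A) A.
Proof.
move=> nat_le_A; have [i i_inj] := nat_le_A; apply: card_le_trans (card_le_square nat_le_A).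
exists (fun o => if o is Some a then (a, i 0) else (i 0, i 1)).
by move=> [a|] [b|] //= [] // => [-> | _ /i_inj | _ /i_inj].
Qed.

Lemma card_le_ord_fun (A : Type) n : card_le nat A -> card_le ('I_n -> A) A.
Proof.
move=> nat_le_A; have [i _] := nat_le_A.
elim: n => [|n [g g_inj]].
  by exists (fun _ => i 0) => f f' _; apply: functional_extensionality_dep => -[].
apply: card_le_trans (card_le_square nat_le_A).
exists (fun f : 'I_n.+1 -> A => (f ord0, g (fun j => f (lift ord0 j)))).
move=> f f' [eq0 /g_inj eq_lift]; apply: functional_extensionality_dep => j.
by case: (unliftP ord0 j) => [j' ->|->] //; apply: (congr1 (@^~ j') eq_lift).
Qed.

Lemma nat_nle_finType (F : finType) : ~ card_le nat F.
Proof.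
move=> [f f_inj]; have : injective (fun j : 'I_#|F|.+1 => f j) by move=> a b /f_inj /val_inj.
by move/leq_card; rewrite card_ord ltnn.
Qed.

Lemma card_le_ord_of_nat_nle (C : Type) : ~ card_le nat C -> exists n, card_le C 'I_n.
Proof.
move=> nat_nle_C; have [[g g_inj]|//] := card_le_total C nat.
have [[n g_lt]|g_unbounded] := pselect (exists n, forall c, g c < n).
  by exists n; exists (fun c => Ordinal (g_lt c)) => a b /(congr1 val) /g_inj.
have above m : exists c, m <= g c.
  apply: contrapT => none; apply: g_unbounded; exists m => c.
  by rewrite ltnNge; apply/negP => le_m; apply: none; exists c.
pose next m := proj1_sig (cid (above m)).
have nextP m : m <= g (next m) by rewrite /next; case: cid.
pose fix h (m : nat) : C := if m is m'.+1 then next (g (h m')).+1 else next 0.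
have h_incr a b : a < b -> g (h a) < g (h b).
  elim: b => [//|b IH]; rewrite ltnS leq_eqVlt => /orP [/eqP ->|/IH lt_ab].
    exact: nextP.
  exact: ltn_trans lt_ab (nextP _).
case: nat_nle_C; exists h => a b eq_h.
apply/eqP; rewrite eqn_leq; apply/andP.
by split; rewrite leqNgt; apply/negP => /h_incr; rewrite eq_h ltnn.
Qed.

Lemma large_fibre (Z D : Type) (h : Z -> D) k : 0 < k -> ~ card_le Z (D * 'I_k) ->
  exists y (z : 'I_k -> Z), injective z /\ forall j, h (z j) = y.
Proof.
move=> k_gt0 Z_nle; apply: contrapT => small_fibres; apply: Z_nle.
have fibre_le y : card_le {w | h w = y} 'I_k.
  have [//|[e e_inj]] := card_le_total {w | h w = y} 'I_k.
  case: small_fibres; exists y, (fun j => proj1_sig (e j)); split.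
    by move=> a b /proj1_sig_inj /e_inj.
  by move=> j; exact: proj2_sig (e j).
pose idx y := proj1_sig (cid (fibre_le y)).
have idx_inj y : injective (idx y) by rewrite /idx; case: cid.
pose pos y w : 'I_k := if pselect (h w = y) is left p then idx y (exist _ w p) else Ordinal k_gt0.
exists (fun w => (h w, pos (h w) w)) => a b [eq_h]; rewrite eq_h /pos.
case: pselect => [pa|//]; case: pselect => [pb|//].
by move=> /idx_inj /(congr1 (@proj1_sig _ _)).
Qed.

Lemma is_succ_pow_le n (K A B : Type) :
  is_succ_pow n K A -> is_succ_pow n K B -> card_le A B.
Proof.
elim: n A B => [|n IH] A B /=.
  move=> [f [f' fK f'K]] [g g_bij]; exists (g \o f') => x y /= eq_g.
  by rewrite -(f'K x) -(f'K y); congr f; apply: (bij_inj g_bij).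
move=> [M [KM [[MA A_nle_M] A_min]]] [M' [KM' [[M'B B_nle_M'] _]]].
apply: A_min; split; first exact: card_le_trans (IH _ _ KM KM') M'B.
by move=> BM; apply: B_nle_M'; apply: card_le_trans BM (IH _ _ KM KM').
Qed.

Lemma succ_pow_chain n (K L : Type) : is_succ_pow n K L -> exists S : nat -> L -> Prop,
  [/\ forall i j x, i <= j -> S i x -> S j x,
      card_le K {x | S 0 x},
      forall i, i < n -> ~ card_le {x | S i.+1 x} {x | S i x} &
      forall i, i <= n -> exists M, is_succ_pow i K M /\ card_le {x | S i x} M].
Proof.
elim: n L => [|n IH] L /=.
  move=> [f [f' fK f'K]]; exists (fun _ _ => True); split=> //.
    exists (fun x => exist (fun _ => True) (f x) I).
    by move=> a b /(congr1 (@proj1_sig _ _)) /(can_inj fK).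
  move=> i; rewrite leqn0 => /eqP ->; exists L; split; first by exists f, f'.
  by exists (@proj1_sig _ _); apply: proj1_sig_inj.
move=> [M [KM [[[f f_inj] L_nle_M] L_min]]].
have [S' [S'_mono KS'0 S'_strict S'_le]] := IH _ KM.
exists (fun i y => if i <= n then (f @` S' i) y else True); split.
- move=> i j y le_ij; case: ifP => le_in; case: ifP => le_jn //.
    by move=> [x S'x <-]; exists x => //; apply: S'_mono S'x.
  by rewrite (leq_trans le_ij le_jn) in le_in.
- by rewrite leq0n; apply: card_le_trans KS'0 (card_le_image_inj _ f_inj).
- move=> i; rewrite ltnS => le_in; case: (ltnP i n) => lt_in; last first.
    have -> : i = n by apply/eqP; rewrite eqn_leq le_in lt_in.
    rewrite leqnn => L_le; apply: L_nle_M.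
    have [M0 [KM0 S'_le_M0]] := S'_le n (leqnn n).
    apply: card_le_trans (is_succ_pow_le KM0 KM).
    apply: card_le_trans S'_le_M0; apply: card_le_trans (card_le_image _ _) .
    apply: card_le_trans L_le.
    by exists (fun x => exist (fun _ => True) x I) => a b /(congr1 (@proj1_sig _ _)).
  rewrite (ltnW lt_in) => le_S; apply: (S'_strict _ lt_in).
  apply: card_le_trans (card_le_image_inj _ f_inj) _.
  exact: card_le_trans le_S (card_le_image _ _).
- move=> i le_i; case: (leqP i n) => le_in; last first.
    have -> : i = n.+1 by apply/eqP; rewrite eqn_leq le_i le_in.
    exists L; split; first by exists M; do !split=> //; exists f.
    by exists (@proj1_sig _ _); apply: proj1_sig_inj.
  have [M0 [KM0 S'_le_M0]] := S'_le i le_in; exists M0; split=> //.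
  exact: card_le_trans (card_le_image _ _) S'_le_M0.
Qed.

Lemma succ_pow_chain_into d (K : Type) (X : 'I_d -> Type) : 0 < d ->
  (forall i : 'I_d, card_ge_succ_pow i K (X i)) ->
  exists (U : Type) (S : nat -> U -> Prop),
  [/\ forall i j x, i <= j -> S i x -> S j x,
      card_le K {x | S 0 x},
      forall m, 0 < m < d -> ~ card_le {x | S m x} {x | S m.-1 x} &
      forall i : 'I_d, card_le {x | S i x} (X i)].
Proof.
move=> d_gt0 KX; have lt_pred : d.-1 < d by rewrite prednK.
have [L [KL _]] := KX (Ordinal lt_pred).
have [S [S_mono KS0 S_strict S_le]] := succ_pow_chain KL.
exists L, S; split=> // [m /andP [m_gt0 lt_md] | i].
  by rewrite -{1}(prednK m_gt0); apply: S_strict; rewrite -ltnS !prednK.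
have le_i : (i : nat) <= d.-1 by rewrite -ltnS prednK.
have [M [KM S_le_M]] := S_le i le_i.
have [Li [KLi Li_le_X]] := KX i.
exact: card_le_trans S_le_M (card_le_trans (is_succ_pow_le KM KLi) Li_le_X).
Qed.

Lemma card_le_absorb (B C : Type) d k : card_le nat B -> card_le C B ->
  card_le ((C * ('I_d -> 'I_k -> option B)) * 'I_k) B.
Proof.
move=> nat_le_B C_le_B.
have k_le_B : card_le 'I_k B by apply: card_le_trans (card_le_ord_nat k) nat_le_B.
have rows_le_B : card_le ('I_d -> 'I_k -> option B) B.
  apply: card_le_trans (card_le_ord_fun d nat_le_B); apply: card_le_arrow.
  apply: card_le_trans (card_le_ord_fun k nat_le_B); apply: card_le_arrow.
  exact: card_le_option.
apply: card_le_trans (card_le_square nat_le_B); apply: card_le_prod k_le_B.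
by apply: card_le_trans (card_le_square nat_le_B); apply: card_le_prod.
Qed.

Section MonochromaticGrid.
Variables (U C : Type) (d k : nat) (S : nat -> U -> Prop) (c : ('I_d -> U) -> C).
Hypothesis k_gt0 : 0 < k.
Hypothesis S_mono : forall i j x, i <= j -> S i x -> S j x.
Hypothesis S0_inf : card_le nat {x | S 0 x}.
Hypothesis C_le_S0 : card_le C {x | S 0 x}.
Hypothesis S0_large : ~ card_le {x | S 0 x} (C * 'I_k).
Hypothesis S_strict : forall m, 0 < m < d -> ~ card_le {x | S m x} {x | S m.-1 x}.

Local Notation rows := ('I_d -> 'I_k -> U).

Lemma card_le_S0 j : card_le {x | S 0 x} {x | S j x}.
Proof. exact: card_le_sig (fun x => S_mono (x := x) (leq0n j)). Qed.

Lemma grid_code m : m < d -> exists (W : Type) (F : rows -> C -> W),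
  ~ card_le {x | S m x} (W * 'I_k) /\
  forall (t t' : rows) g g',
    (forall (i : 'I_d) j, S i (t i j)) -> (forall (i : 'I_d) j, S i (t' i j)) ->
    F t g = F t' g' -> g = g' /\ forall i : 'I_d, i < m -> t i = t' i.
Proof.
move=> lt_md; case: (posnP m) => [-> | m_gt0].
  by exists C, (fun _ g => g); split.
pose opt u : option {x | S m.-1 x} :=
  if pselect (S m.-1 u) is left p then Some (exist _ u p) else None.
exists (C * ('I_d -> 'I_k -> option {x | S m.-1 x}))%type.
exists (fun (t : rows) g => (g, fun (i : 'I_d) j => if i < m then opt (t i j) else None)); split.
  move=> S_le; apply: (S_strict (m := m)); first by rewrite m_gt0.
  apply: card_le_trans S_le _; apply: card_le_absorb.
    exact: card_le_trans S0_inf (card_le_S0 _).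
  exact: card_le_trans C_le_S0 (card_le_S0 _).
move=> t t' g g' tS t'S [-> eq_rows]; split=> // i lt_im.
apply: functional_extensionality_dep => j.
have S_below (s : rows) : (forall (i : 'I_d) j, S i (s i j)) -> S m.-1 (s i j).
  by move=> sS; apply: (S_mono (i := i)); [rewrite -ltnS prednK | apply: sS].
have := congr1 (fun r => r i j) eq_rows; rewrite /= lt_im /opt.
case: pselect => [p|[]]; last exact: S_below tS.
case: pselect => [p'|[]]; last exact: S_below t'S.
by move/(congr1 (fun o => if o is Some x then proj1_sig x else t i j)).
Qed.

Definition mono_grid m (b : 'I_d -> U) (t : rows) (g : C) :=
  [/\ forall i : 'I_d, i < m -> injective (t i),
      forall (i : 'I_d) j, S i (t i j),
      forall (i : 'I_d) j, m <= i -> t i j = b i &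
      forall J : 'I_d -> 'I_k, c (fun i => t i (J i)) = g].

Lemma mono_grid_exists m : m <= d ->
  forall b, (forall i : 'I_d, S i (b i)) -> exists t g, mono_grid m b t g.
Proof.
elim: m => [|m IH] le_md b bS; first by exists (fun i _ => b i), (c b); split.
pose bz (z : {x | S m x}) (i : 'I_d) := if i == m :> nat then proj1_sig z else b i.
have bzS z (i : 'I_d) : S i (bz z i).
  by rewrite /bz; case: eqP => [->|_]; [exact: proj2_sig z | exact: bS].
have grid_at z : exists tg : rows * C, mono_grid m (bz z) tg.1 tg.2.
  by have [t [g tg]] := IH (ltnW le_md) (bz z) (bzS z); exists (t, g).
pose tz z := proj1_sig (cid (grid_at z)).
have tzP z : mono_grid m (bz z) (tz z).1 (tz z).2 by rewrite /tz; case: cid.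
have [W [F [S_large F_code]]] := grid_code le_md.
have [y [zs [zs_inj zs_fibre]]] := large_fibre (fun z => F (tz z).1 (tz z).2) k_gt0 S_large.
have same_fibre j j' : (tz (zs j)).2 = (tz (zs j')).2 /\
    forall i : 'I_d, i < m -> (tz (zs j)).1 i = (tz (zs j')).1 i.
  by apply: F_code; [case: (tzP (zs j)) | case: (tzP (zs j')) | rewrite !zs_fibre].
pose j0 := Ordinal k_gt0; pose t0 := tz (zs j0).
pose t (i : 'I_d) j := if i < m then t0.1 i j else if i == m :> nat then proj1_sig (zs j) else b i.
exists t, t0.2; split.
- move=> i; rewrite ltnS leq_eqVlt => /orP [/eqP eq_im|lt_im] j j'; rewrite /t.
    by rewrite eq_im ltnn eqxx => /proj1_sig_inj /zs_inj.
  by rewrite lt_im; case: (tzP (zs j0)) => t0_inj _ _ _; apply: t0_inj.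
- move=> i j; rewrite /t; case: ltnP => _; first by case: (tzP (zs j0)).
  by case: eqP => [->|_]; [exact: proj2_sig (zs j) | exact: bS].
- by move=> i j lt_mi; rewrite /t ltnNge (ltnW lt_mi) (gtn_eqF lt_mi).
move=> J; pose jm := J (Ordinal le_md).
have [<- eq_below] := same_fibre jm j0.
case: (tzP (zs jm)) => _ _ frozen c_mono; rewrite -(c_mono J); congr c.
apply: functional_extensionality_dep => i.
rewrite /t; case: ltnP => [lt_im|le_mi]; first by rewrite (eq_below i lt_im).
rewrite frozen // /bz; case: eqP => // eq_im.
by rewrite /jm; congr (proj1_sig (zs (J _))); apply: val_inj.
Qed.

Lemma monochromatic_grid : exists (t : rows) (g : C),
  [/\ forall i, injective (t i), forall (i : 'I_d) j, S i (t i j) &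
      forall J : 'I_d -> 'I_k, c (fun i => t i (J i)) = g].
Proof.
have [n0 _] := S0_inf.
have [t [g [t_inj tS _ t_mono]]] :=
  mono_grid_exists (leqnn d) (fun i => S_mono (leq0n i) (proj2_sig (n0 0))).
by exists t, g; split=> // i; apply: t_inj.
Qed.

End MonochromaticGrid.

Lemma card_lt_not_le_prod_ord (K C T : Type) k : card_le nat K -> card_lt C K ->
  card_le K T -> ~ card_le T (C * 'I_k).
Proof.
move=> nat_le_K [C_le_K K_nle_C] K_le_T T_le; have K_le := card_le_trans K_le_T T_le.
have [nat_le_C|nat_nle_C] := pselect (card_le nat C).
  apply: K_nle_C; apply: card_le_trans K_le (card_le_trans _ (card_le_square nat_le_C)).
  exact: card_le_prod (card_le_refl C) (card_le_trans (card_le_ord_nat k) nat_le_C).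
have [n C_le_n] := card_le_ord_of_nat_nle nat_nle_C.
apply: (@nat_nle_finType ('I_n * 'I_k)%type).
exact: card_le_trans nat_le_K (card_le_trans K_le (card_le_prod C_le_n (card_le_refl _))).
Qed.

Lemma card_le_sig_extend (T Y : Type) (P : T -> Prop) : (exists x, P x) ->
  card_le {x | P x} Y -> exists f : T -> Y, forall x y, P x -> P y -> f x = f y -> x = y.
Proof.
move=> [x0 Px0] [f f_inj].
exists (fun x => if pselect (P x) is left Px then f (exist _ x Px) else f (exist _ x0 Px0)).
move=> x y Px Py; case: pselect => [Px'|//]; case: pselect => [Py'|//].
by move=> /f_inj /(congr1 (@proj1_sig _ _)).
Qed.

(* The template point [e j] goes to the grid point whose [i]-th index depends only on the
   [i]-th coordinate of [e j], so equal coordinates stay equal. *)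
Lemma template_in_grid d k (A X : 'I_d -> Type) (P : dtuple A -> Prop)
    (t : forall i, 'I_k -> X i) :
  0 < k -> is_template k P -> (forall i, injective (t i)) ->
  exists Q, L_edge k P Q /\ forall v, Q v -> exists J : 'I_d -> 'I_k, v = fun i => t i (J i).
Proof.
move=> k_gt0 [e [e_inj eP]] t_inj.
pose rep (i : 'I_d) (a : A i) : 'I_k :=
  if pselect (exists j, e j i = a) is left h then proj1_sig (cid h) else Ordinal k_gt0.
have repP i j : e (rep i (e j i)) i = e j i.
  by rewrite /rep; case: pselect => [h|[]]; [exact: proj2_sig (cid h) | exists j].
pose q j : dtuple X := fun i => t i (rep i (e j i)).
exists (fun v => exists j, q j = v); split; last by move=> _ [j <-]; eexists.
split.
  exists q; split=> // j j' eq_q; apply: e_inj; apply: functional_extensionality_dep => i.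
  by rewrite -(repP i j) -(repP i j') (t_inj i _ _ (congr1 (@^~ i) eq_q)).
pose J (x : {x | P x}) := proj1_sig (cid ((eP (proj1_sig x)).1 (proj2_sig x))).
have JP x : e (J x) = proj1_sig x by rewrite /J; case: cid.
exists (fun x => exist (fun v => exists j, q j = v) (q (J x)) (ex_intro _ (J x) erefl)); split.
  move=> [v [j qj]]; exists (exist P (e j) ((eP _).2 (ex_intro _ j erefl))).
  by apply: proj1_sig_inj => /=; rewrite -qj; congr q; apply: e_inj; apply: JP.
by move=> x y i eq_i /=; rewrite /q !JP eq_i.
Qed.

Theorem lemma1p2 (d k : nat) (hd : 1 <= d) (hk : 2 <= k)
  (K : Type) (hK : card_le nat K)
  (A : 'I_d -> Type) (P : dtuple A -> Prop) (hP : @is_template d k A P)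
  (X : 'I_d -> Type) (hX : forall i : 'I_d, card_ge_succ_pow i K (X i)) :
  chi_ge (@L_edge d k A X P) K.
Proof.
move=> C c C_lt_K c_proper; have k_gt0 : 0 < k by apply: leq_trans hk.
have [U [S [S_mono K_le_S0 S_strict S_le_X]]] := succ_pow_chain_into hd hX.
have S0_inf := card_le_trans hK K_le_S0.
have S_inhab (i : 'I_d) : exists x, S i x.
  by have [n0 _] := S0_inf; exists (proj1_sig (n0 0)); apply: S_mono (proj2_sig (n0 0)).
pose emb i := proj1_sig (cid (card_le_sig_extend (S_inhab i) (S_le_X i))).
have emb_inj (i : 'I_d) x y : S i x -> S i y -> emb i x = emb i y -> x = y.
  by rewrite /emb; case: cid => f; apply.
have [t [g [t_inj tS t_mono]]] := monochromatic_grid (fun u => c (fun i => emb i (u i)))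
  k_gt0 S_mono S0_inf (card_le_trans C_lt_K.1 K_le_S0)
  (card_lt_not_le_prod_ord hK C_lt_K K_le_S0) S_strict.
have [Q [Q_edge Q_grid]] := template_in_grid (t := fun i j => emb i (t i j)) k_gt0 hP
  (fun i j j' eq_t => t_inj i _ _ (emb_inj i _ _ (tS i j) (tS i j') eq_t)).
have [x [y [/Q_grid [Jx ->] [/Q_grid [Jy ->]]]]] := c_proper Q Q_edge.
by rewrite !t_mono.
Qed.
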